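(* Let $k\in\omega\setminus\{0,1\}$, let $\psi$ be a bounded complexity measure and let $T\in\mathcal M_k^\infty\setminus\mathcal M_k^{\infty c}$. Then $\psi^a(T)=\max\{M_\psi(T,\bar\delta):\bar\delta\in\Delta(T)\}$.
   Context: Notation: $\omega=\{0,1,2,\dots\}$; $\mathcal P(\omega)$ is the set of nonempty finite subsets of $\omega$; for $k\in\omega\setminus\{0,1\}$, $E_k=\{0,1,\dots,k-1\}$. $P=\{f_i:i\in\omega\}$ is a set of attributes, $f_i\neq f_j$ for $i\ne j$. Decision tables: $\mathcal M_k^\infty$ is the set of rectangular tables filled with numbers from $E_k$, whose columns are labeled with pairwise different attributes from $P$, whose rows are pairwise different, and each row of which is labeled with a set from $\mathcal P(\omega)$ (its set of decisions). The empty table (no rows) is denoted $\Lambda$ and belongs to $\mathcal M_k^\infty$. For $T\in\mathcal M_k^\infty$: $\Delta(T)$ is the set of rows; $\Pi(T)$ is the intersection of the decision sets of all rows (common decisions); $\mathcal M_k^{\infty c}$ is the set of tables having at least one common decision, and $\Lambda\in\mathcal M_k^{\infty c}$; $\mathrm{At}(T)$ is the set of attributes labeling columns. For nonempty $T$ and a word $\alpha=(f_{i_1},\delta_1)\cdots(f_{i_m},\delta_m)$ with $f_{i_j}\in\mathrm{At}(T)$, $\delta_j\in E_k$, $T\alpha$ is the subtable of $T$ consisting of the rows having value $\delta_j$ in the column $f_{i_j}$ for all $j$; for the empty word $\lambda$, $T\lambda=T$. Decision trees: a $k$-decision tree is a finite directed rooted tree with at least two nodes in which the root and the edges leaving the root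 are unlabeled, each terminal node is labeled with a decision from $\omega$, and each other node is labeled with an attribute from $P$, each edge leaving such a node being labeled with a number from $E_k$. $\mathrm{At}(\Gamma)$ is the set of attributes labeling nodes of $\Gamma$. For a complete path $\tau=v_1,d_1,\dots,v_m,d_m,v_{m+1}$ (from the root to a terminal node), $\pi(\tau)=\lambda$ if $m=1$, and otherwise $\pi(\tau)=(f_{i_2},\delta_2)\cdots(f_{i_m},\delta_m)$ where $v_j$ is labeled $f_{i_j}$ and $d_j$ is labeled $\delta_j$; $T(\tau)=T\pi(\tau)$. For $T\ne\Lambda$, a nondeterministic decision tree for $T$ is a $k$-decision tree $\Gamma$ with $\mathrm{At}(\Gamma)\subseteq\mathrm{At}(T)$ such that every row of $T$ belongs to $T(\tau)$ for some complete path $\tau$, and for every complete path $\tau$ either $T(\tau)=\Lambda$ or the decision at the terminal node of $\tau$ belongs to $\Pi(T(\tau))$. Complexity measures: a partially bounded complexity measure is a function $\psi:P^*\to\omega$ on finite words over $P$ such that for all words $\alpha_1,\alpha_2$: $\psi(\alpha_1)=0$ iff $\alpha_1=\lambda$; $\psi(\alpha_1)$ is invariant under permutation of letters; $\psi(\alpha_1)\le\psi(\alpha_1\alpha_2)$; $\psi(\alpha_1\alpha_2)\le\psi(\alpha_1)+\psi(\alpha_2)$. It is bounded if in addition $\psi(\alpha)\ge|\alpha|$ for all $\alpha$. $\psi$ is extended to words $(f_{i_1},\delta_1)\cdots(f_{i_m},\delta_m)$ by $\psi(f_{i_1}\cdots f_{i_m})$ ($\psi(\lambda)=0$). For a $k$-decision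 tree $\Gamma$, $\psi(\Gamma)=\max_\tau\psi(\pi(\tau))$ over complete paths. For $T\ne\Lambda$, $\psi^a(T)$ is the minimum of $\psi(\Gamma)$ over nondeterministic decision trees $\Gamma$ for $T$. $M_\psi(T,\bar\delta)$: let $T\notin\mathcal M_k^{\infty c}$ have columns labeled $f_{t_1},\dots,f_{t_n}$ (in this order). For $\bar\delta=(\delta_1,\dots,\delta_n)\in E_k^n$, $M_\psi(T,\bar\delta)$ is the minimum number $p\in\omega$ for which there exist attributes $f_{t_{i_1}},\dots,f_{t_{i_m}}\in\mathrm{At}(T)$ ($m\ge0$) such that $T(f_{t_{i_1}},\delta_{i_1})\cdots(f_{t_{i_m}},\delta_{i_m})\in\mathcal M_k^{\infty c}$ and $\psi(f_{t_{i_1}}\cdots f_{t_{i_m}})=p$. *)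

From mathcomp Require Import all_boot.
From Stdlib Require Import ClassicalEpsilon.
Set Implicit Arguments. Unset Strict Implicit. Unset Printing Implicit Defensive.

(* Attributes f_i are identified with their index i : nat; decisions are nats. *)

Definition is_least (P : nat -> Prop) (m : nat) : Prop :=
  P m /\ forall n, P n -> m <= n.

(* nat_min P = the minimum of P when P is nonempty (unspecified otherwise). *)
Definition nat_min (P : nat -> Prop) : nat :=
  epsilon (inhabits 0) (is_least P).

Definition partially_bounded_measure (psi : seq nat -> nat) : Prop :=
  [/\ (forall a, psi a = 0 <-> a = [::]),
      (forall a b, perm_eq a b -> psi a = psi b),
      (forall a b, psi a <= psi (a ++ b)) &
      (forall a b, psi (a ++ b) <= psi a + psi b)].

Definition bounded_measure (psi : seq nat -> nat) : Prop :=
  partially_bounded_measure psi /\ forall a, size a <= psi a.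

(* extension of psi to words (f_i1,d1)...(f_im,dm) *)
Definition psiw (psi : seq nat -> nat) (w : seq (nat * nat)) : nat :=
  psi (map fst w).

(* cols: attribute labels of the columns (in order);
   rows: (tuple of values, set of decisions as a nonempty list). *)
Record table := Table { cols : seq nat; rows : seq (seq nat * seq nat) }.

(* T belongs to M_k^infty *)
Definition table_wf (k : nat) (T : table) : Prop :=
  [/\ uniq (cols T),
      uniq (map fst (rows T)) &
      forall r, r \in rows T ->
        [/\ size r.1 = size (cols T), all (fun v => v < k) r.1 & r.2 != [::]]].

Definition Delta (T : table) : seq (seq nat) := map fst (rows T).

Definition in_Pi (T : table) (d : nat) : Prop :=
  forall r, r \in rows T -> d \in r.2.

(* T in M_k^{infty c} (the empty table Lambda included) *)
Definition has_common (T : table) : Prop :=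
  rows T = [::] \/ exists d, in_Pi T d.

Definition rval (T : table) (r : seq nat) (a : nat) : nat :=
  nth 0 r (index a (cols T)).

Definition subtable (T : table) (alpha : seq (nat * nat)) : table :=
  Table (cols T)
    [seq r <- rows T | all (fun p => rval T r.1 p.1 == p.2) alpha].

(* A non-root node: terminal (decision) or attribute-labeled with labeled edges. *)
Inductive dnode :=
  | Leaf of nat
  | Node of nat & seq (nat * dnode).

(* A tree is given by the (unlabeled) list of subtrees hanging from the root. *)
Definition dtree := seq dnode.

Fixpoint node_wf (k : nat) (atts : seq nat) (t : dnode) : bool :=
  match t with
  | Leaf _ => true
  | Node a ch =>
      [&& a \in atts, 0 < size ch &
        (fix go (l : seq (nat * dnode)) : bool :=
           match l with
           | [::] => true
           | (d, c) :: l' => [&& d < k, node_wf k atts c & go l']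
           end) ch]
  end.

Definition tree_wf (k : nat) (atts : seq nat) (G : dtree) : bool :=
  (0 < size G) && all (node_wf k atts) G.

(* complete paths below a non-root node: (pi(tau), terminal decision) *)
Fixpoint node_paths (t : dnode) : seq (seq (nat * nat) * nat) :=
  match t with
  | Leaf d => [:: ([::], d)]
  | Node a ch =>
      (fix go (l : seq (nat * dnode)) :=
         match l with
         | [::] => [::]
         | (d, c) :: l' =>
             map (fun p => ((a, d) :: p.1, p.2)) (node_paths c) ++ go l'
         end) ch
  end.

Definition tree_paths (G : dtree) : seq (seq (nat * nat) * nat) :=
  flatten (map node_paths G).

Definition psi_tree (psi : seq nat -> nat) (G : dtree) : nat :=
  \max_(p <- tree_paths G) psiw psi p.1.

Definition nondet_tree (k : nat) (T : table) (G : dtree) : Prop :=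
  [/\ tree_wf k (cols T) G,
      (forall r, r \in Delta T ->
         exists2 p, p \in tree_paths G & r \in Delta (subtable T p.1)) &
      (forall p, p \in tree_paths G ->
         rows (subtable T p.1) = [::] \/ in_Pi (subtable T p.1) p.2)].

Definition psi_a (k : nat) (psi : seq nat -> nat) (T : table) : nat :=
  nat_min (fun q => exists G, nondet_tree k T G /\ psi_tree psi G = q).

(* M_psi(T, delta): indices ix (0-based) select columns t_{i_1},...,t_{i_m} *)
Definition M_psi (psi : seq nat -> nat) (T : table) (delta : seq nat) : nat :=
  nat_min (fun q => exists ix : seq nat,
    [/\ all (fun i => i < size (cols T)) ix,
        has_common (subtable T [seq (nth 0 (cols T) i, nth 0 delta i) | i <- ix]) &
        psi [seq nth 0 (cols T) i | i <- ix] = q]).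

(* Every row [delta] of [T] lies on some complete path of a nondeterministic
   tree, and the word of that path, read off as columns of [T] with the values
   of [delta], is a certificate for [M_psi T delta]; hence [psi^a(T)] is at
   least the maximum.  Conversely, the tree with one chain per row, each chain
   spelling an optimal certificate of its row, is a nondeterministic tree whose
   complexity is exactly that maximum. *)
From Stdlib Require Import ClassicalEpsilon Classical.
From Stdlib Require Wf_nat.
From mathcomp Require Import all_boot.
Set Implicit Arguments. Unset Strict Implicit. Unset Printing Implicit Defensive.

Lemma nat_min_is_least (P : nat -> Prop) n : P n -> is_least P (nat_min P).
Proof.
move=> Pn; apply: epsilon_spec.
have [m [[Pm m_min] _]] := Wf_nat.dec_inh_nat_subset_has_unique_least_element
  P (fun n => classic (P n)) (ex_intro _ n Pn).
by exists m; split=> // q /m_min /leP.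
Qed.

Lemma nat_minP (P : nat -> Prop) n : P n -> P (nat_min P).
Proof. by case/nat_min_is_least. Qed.

Lemma nat_min_le (P : nat -> Prop) n : P n -> nat_min P <= n.
Proof. by move=> Pn; case: (nat_min_is_least Pn) => _; apply. Qed.

Lemma uniq_map_fst_inj (A B : eqType) (s : seq (A * B)) :
  uniq (map fst s) -> {in s &, injective fst}.
Proof.
move=> uniq_s x y xs ys exy.
have index_fst z : z \in s -> index z s = index z.1 (map fst s).
  move=> zs; rewrite -{2}(nth_index z zs) -(nth_map z z.1) ?index_mem //.
  by rewrite index_uniq ?size_map ?index_mem.
by rewrite -(nth_index x xs) -(nth_index x ys) !index_fst // exy.
Qed.

Fixpoint dnode_ind_nested (P : dnode -> Prop) (HL : forall d, P (Leaf d))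
  (HN : forall a ch, (forall x, List.In x ch -> P x.2) -> P (Node a ch))
  (t : dnode) : P t :=
  match t with
  | Leaf d => HL d
  | Node a ch => HN a ch ((fix go (l : seq (nat * dnode)) :
                            forall x, List.In x l -> P x.2 :=
       match l with
       | [::] => fun x H => match H with end
       | (d0, c) :: l' => fun x H => match H with
           | or_introl E =>
               eq_ind (d0, c) (fun z => P z.2) (dnode_ind_nested HL HN c) x E
           | or_intror H' => go l' x H'
           end
       end) ch)
  end.

Lemma node_paths_wf k (atts : seq nat) t : node_wf k atts t ->
  forall p, p \in node_paths t -> all (fun q => q.1 \in atts) p.1.
Proof.
elim/dnode_ind_nested: t => [d|a ch IH] /=; first by move=> _ p; rewrite inE => /eqP->.
case/and3P => a_atts _.
elim: ch IH => [|[d c] l IHl] IH //= /and3P [_ c_wf l_wf] p.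
rewrite mem_cat => /orP [/mapP [p' p'_c ->]|p_l].
  by rewrite /= a_atts; apply: (IH (d, c)) => //; left.
by apply: IHl => // x x_l; apply: IH; right.
Qed.

Lemma tree_paths_wf k (atts : seq nat) (G : dtree) : tree_wf k atts G ->
  forall p, p \in tree_paths G -> all (fun q => q.1 \in atts) p.1.
Proof.
case/andP => _; rewrite /tree_paths; elim: G => [|t G IH] //= /andP [t_wf G_wf] p.
by rewrite mem_cat => /orP [/(node_paths_wf t_wf)|/(IH G_wf)].
Qed.

Fixpoint chain (w : seq (nat * nat)) (d : nat) : dnode :=
  if w is (a, v) :: w' then Node a [:: (v, chain w' d)] else Leaf d.

Lemma chain_paths w d : node_paths (chain w d) = [:: (w, d)].
Proof. by elim: w => [|[a v] w IH] //=; rewrite IH. Qed.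

Lemma chain_wf k (atts : seq nat) w d :
  all (fun q => (q.1 \in atts) && (q.2 < k)) w -> node_wf k atts (chain w d).
Proof. by elim: w => [|[a v] w IH] //= /andP [/andP [-> ->] /IH ->]. Qed.

Definition chains (ps : seq (seq (nat * nat) * nat)) : dtree :=
  [seq chain p.1 p.2 | p <- ps].

Lemma chains_paths ps : tree_paths (chains ps) = ps.
Proof.
by elim: ps => // -[w d] ps IH; rewrite /tree_paths /= chain_paths cat1s; congr cons.
Qed.

Lemma chains_wf k (atts : seq nat) ps : ps != [::] ->
  (forall p, p \in ps -> all (fun q => (q.1 \in atts) && (q.2 < k)) p.1) ->
  tree_wf k atts (chains ps).
Proof.
move=> ps_n0 ps_wf; rewrite /tree_wf size_map lt0n size_eq0 ps_n0 /=.
by rewrite all_map; apply/allP => p p_ps; apply/chain_wf/ps_wf.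
Qed.

Section Certificates.
Variables (k : nat) (psi : seq nat -> nat) (T : table).
Hypothesis T_wf : table_wf k T.

Local Notation C := (cols T).

Definition assign (delta : seq nat) (ix : seq nat) : seq (nat * nat) :=
  [seq (nth 0 C i, nth 0 delta i) | i <- ix].

Lemma M_psi_le delta ix :
  all (fun i => i < size C) ix -> has_common (subtable T (assign delta ix)) ->
  M_psi psi T delta <= psi [seq nth 0 C i | i <- ix].
Proof. by move=> ix_C common; apply: nat_min_le; exists ix. Qed.

Lemma rval_nth r i : i < size C -> rval T r (nth 0 C i) = nth 0 r i.
Proof. by case: T_wf => uniq_C _ _ i_C; rewrite /rval index_uniq. Qed.

Lemma row_in_assign_subtable r ix : r \in rows T ->
  all (fun i => i < size C) ix -> r \in rows (subtable T (assign r.1 ix)).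
Proof.
move=> r_T ix_C; rewrite mem_filter r_T andbT.
by apply/allP => _ /mapP [i i_ix ->] /=; rewrite rval_nth ?(allP ix_C).
Qed.

(* Assigning all columns isolates a single row, since rows are pairwise different. *)
Lemma full_assign_common r : r \in rows T ->
  has_common (subtable T (assign r.1 (iota 0 (size C)))).
Proof.
case: T_wf => _ uniq_rows rows_wf r_T.
have [r_size _ r_dec] := rows_wf r r_T.
right; exists (head 0 r.2) => s; rewrite mem_filter => /andP [s_r s_T].
have [s_size _ _] := rows_wf s s_T.
have -> : s = r.
  apply: (uniq_map_fst_inj uniq_rows) => //.
  apply: (@eq_from_nth _ 0) => [|i]; first by rewrite s_size r_size.
  rewrite s_size => i_C; rewrite -(rval_nth s.1 i_C).
  have i_iota : i \in iota 0 (size C) by rewrite mem_iota.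
  by move/eqP: (allP s_r _ (map_f (fun j => (nth 0 C j, nth 0 r.1 j)) i_iota)).
by move: r_dec; case: r.2 => // d D _; rewrite mem_head.
Qed.

Lemma M_psi_attained delta : delta \in Delta T ->
  exists ix, [/\ all (fun i => i < size C) ix,
    has_common (subtable T (assign delta ix)) &
    psi [seq nth 0 C i | i <- ix] = M_psi psi T delta].
Proof.
case/mapP => r r_T ->.
rewrite /M_psi; set P := (X in nat_min X); change (P (nat_min P)).
apply: (@nat_minP P); exists (iota 0 (size C)); split=> //.
  by apply/allP => i; rewrite mem_iota.
exact: full_assign_common.
Qed.

Lemma assign_index delta (w : seq (nat * nat)) :
  all (fun q => q.1 \in C) w -> all (fun q => rval T delta q.1 == q.2) w ->
  assign delta [seq index q.1 C | q <- w] = w.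
Proof.
move=> w_C w_delta; rewrite /assign -map_comp -[RHS]map_id.
apply/eq_in_map => -[a v] q_w /=.
by rewrite nth_index ?(allP w_C _ q_w) //; congr pair; apply/eqP: (allP w_delta _ q_w).
Qed.

End Certificates.

Section Bounds.
Variables (k : nat) (psi : seq nat -> nat) (T : table).

Lemma max_M_psi_le_tree G : nondet_tree k T G ->
  \max_(d <- Delta T) M_psi psi T d <= psi_tree psi G.
Proof.
case=> G_wf cover path_common; apply/bigmax_leqP_seq => delta delta_T _.
have [p p_G /mapP [r r_p delta_r]] := cover _ delta_T.
move: r_p; rewrite mem_filter => /andP [r_p _].
have p_C := tree_paths_wf G_wf p_G.
have p_delta : all (fun q => rval T delta q.1 == q.2) p.1 by rewrite delta_r.
have w_p := assign_index p_C p_delta.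
set ix := [seq index q.1 (cols T) | q <- p.1].
have ix_C : all (fun i => i < size (cols T)) ix.
  by apply/allP => _ /mapP [q q_p ->]; rewrite index_mem (allP p_C).
have ix_common : has_common (subtable T (assign T delta ix)).
  by rewrite w_p; have [|] := path_common p p_G; [left | right; exists p.2].
apply: leq_trans (M_psi_le psi ix_C ix_common) _.
have -> : [seq nth 0 (cols T) i | i <- ix] = map fst p.1.
  by rewrite -(congr1 (map fst) w_p) /assign -map_comp.
exact: (leq_bigmax_seq (F := fun p => psiw psi p.1)).
Qed.

Hypotheses (T_wf : table_wf k T) (T_n0 : rows T != [::]).

Lemma exists_nondet_tree_le_max_M_psi :
  exists2 G, nondet_tree k T G & psi_tree psi G <= \max_(d <- Delta T) M_psi psi T d.
Proof.
pose cert delta ix := [/\ all (fun i => i < size (cols T)) ix,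
  has_common (subtable T (assign T delta ix)) &
  psi [seq nth 0 (cols T) i | i <- ix] = M_psi psi T delta].
pose ix_of delta := epsilon (inhabits [::]) (cert delta).
have ix_ofP delta : delta \in Delta T -> cert delta (ix_of delta).
  by move=> delta_T; apply: epsilon_spec; exact: (M_psi_attained psi T_wf delta_T).
pose path_of delta := (assign T delta (ix_of delta),
  epsilon (inhabits 0) (in_Pi (subtable T (assign T delta (ix_of delta))))).
exists (chains (map path_of (Delta T))); last first.
  rewrite /psi_tree chains_paths big_map; apply/bigmax_leqP_seq => delta delta_T _.
  have [_ _ psi_ix] := ix_ofP _ delta_T.
  by rewrite /psiw /assign -map_comp /= psi_ix leq_bigmax_seq.
split; rewrite ?chains_paths.
- apply: chains_wf; first by rewrite -size_eq0 /Delta !size_map size_eq0.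
  move=> _ /mapP [delta delta_T ->]; have [ix_C _ _] := ix_ofP _ delta_T.
  have /mapP [r r_T delta_r] := delta_T; have [_ _ /(_ r r_T) [r_size r_k _]] := T_wf.
  apply/allP => _ /mapP [i i_ix ->] /=; have i_C := allP ix_C i i_ix.
  by rewrite mem_nth //= delta_r (allP r_k) // mem_nth // r_size.
- move=> _ /mapP [r r_T ->]; exists (path_of r.1); first by rewrite map_f ?map_f.
  have [ix_C _ _] := ix_ofP _ (map_f fst r_T).
  exact: (map_f fst (row_in_assign_subtable T_wf r_T ix_C)).
- move=> _ /mapP [delta delta_T ->].
  have [_ [rows0|[d d_Pi]] _] := ix_ofP _ delta_T; [by left | right].
  exact: epsilon_spec (ex_intro _ d d_Pi).
Qed.

End Bounds.

Theorem lemma6 (k : nat) (psi : seq nat -> nat) (T : table) :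
  2 <= k -> bounded_measure psi -> table_wf k T -> ~ has_common T ->
  psi_a k psi T = \max_(d <- Delta T) M_psi psi T d.
Proof.
move=> _ _ T_wf T_nc.
have T_n0 : rows T != [::] by apply/eqP => T0; apply: T_nc; left.
have [G G_T G_le] := exists_nondet_tree_le_max_M_psi psi T_wf T_n0.
rewrite /psi_a; set P := (X in nat_min X).
have G_P : P (psi_tree psi G) by exists G.
have [[G0 [G0_T G0_min]] _] := nat_min_is_least G_P.
apply/eqP; rewrite eqn_leq (leq_trans (nat_min_le G_P) G_le) -G0_min /=.
exact: max_M_psi_le_tree G0_T.
Qed.
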